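(* For every integer $n\ge 1$, let $\rho_n$ be the number of distinct Manacher arrays of strings of length $n$ (over arbitrary alphabets), and let $r_{m}$ be the number of distinct rooted duplication trees with $m$ leaves. Then $\rho_n \le r_{n+1}$.
   Context: Strings are indexed from 1; $S[i..j]=S[i]S[i+1]\cdots S[j]$ (empty if $j<i$). A string $P$ is a palindrome if $P[i]=P[|P|-i+1]$ for all $i$. The Manacher array of a string $S$ of length $n$ is the array $\mathsf A[1..2n-1]$ where, for $i=2k-1$, $\mathsf A[i]$ is the largest $r\ge 0$ with $1\le k-r$, $k+r\le n$ and $S[k-r..k+r]$ a palindrome, and for $i=2k$, $\mathsf A[i]$ is the largest $r\ge0$ with $1\le k-r+1$, $k+r\le n$ and $S[k-r+1..k+r]$ a palindrome. Rooted duplication trees: start with the ordered array $(g)$ consisting of a single gene (the root). A tandem-duplication event applied to a current ordered array of genes $(g_1,\dots,g_m)$ chooses a contiguous block $g_i,\dots,g_{i+\ell-1}$ ($1\le i\le i+\ell-1\le m$), creates for each $g_j$ in the block two new genes $\mathrm{lc}(g_j)$, $\mathrm{rc}(g_j)$ (its left and right child), and replaces the block by $\mathrm{lc}(g_i),\dots,\mathrm{lc}(g_{i+\ell-1}),\mathrm{rc}(g_i),\dots,\mathrm{rc}(g_{i+\ell-1})$. A rooted duplication tree is a rooted binary tree (each internal node has a left and a right child) together with the linear order on its leaves, which arises from the single root by some finite sequence of such events (internal nodes are the duplicated genes, leaves are the genes of the final array, in the final array's order). Two such trees are identified if they are isomorphic as rooted binary trees preserving left/right children and the leaf order; $r_m$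 counts the resulting classes with $m$ leaves. *)

From mathcomp Require Import all_boot.
Set Implicit Arguments. Unset Strict Implicit. Unset Printing Implicit Defensive.

(* 1-indexed substring S[a..b] (empty if b < a), for 1 <= a. *)
Definition substr (T : Type) (s : seq T) (a b : nat) : seq T :=
  take (b.+1 - a) (drop a.-1 s).

Definition palindrome (T : eqType) (P : seq T) : bool := rev P == P.

Definition man_odd (T : eqType) (s : seq T) (k : nat) : nat :=
  \max_(0 <= r < (size s).+1 | [&& r < k, k + r <= size s &
                              palindrome (substr s (k - r) (k + r))]) r.

Definition man_even (T : eqType) (s : seq T) (k : nat) : nat :=
  \max_(0 <= r < (size s).+1 | [&& r <= k, k + r <= size s &
                              palindrome (substr s (k - r).+1 (k + r))]) r.

Definition manacher (T : eqType) (s : seq T) : seq nat :=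
  [seq (if odd i then man_odd s (uphalf i) else man_even s i./2)
  | i <- iota 1 ((size s).*2.-1)].

Definition is_manacher_array (n : nat) (A : seq nat) : Prop :=
  exists (T : eqType) (s : seq T), size s = n /\ manacher s = A.

(* Genes are named by their path from the root: false = left child (lc),
   true = right child (rc).  A duplication event on the block of length
   l >= 1 starting at (0-indexed) position i. *)
Definition dup_event (a : seq (seq bool)) (i l : nat) : seq (seq bool) :=
  let blk := take l (drop i a) in
  take i a ++ [seq rcons g false | g <- blk]
           ++ [seq rcons g true | g <- blk] ++ drop (i + l) a.

Inductive dup_reachable : seq (seq bool) -> Prop :=
| dup_root : dup_reachable [:: [::]]
| dup_step a i l : dup_reachable a -> 0 < l -> i + l <= size a ->
    dup_reachable (dup_event a i l).

(* A rooted duplication tree with m leaves, up to isomorphism, is determined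
   by (and determines) its final ordered array of leaves named by root paths. *)
Definition is_dup_tree (m : nat) (a : seq (seq bool)) : Prop :=
  dup_reachable a /\ size a = m.

Definition has_card (T : eqType) (P : T -> Prop) (k : nat) : Prop :=
  exists s : seq T, [/\ uniq s, forall x, x \in s <-> P x & size s = k].

From mathcomp Require Import all_boot zify.
Set Implicit Arguments. Unset Strict Implicit. Unset Printing Implicit Defensive.

(* A Manacher array is determined by the palindromic-suffix profile of the
   string, the lengths x_1, ..., x_n of the longest palindromic suffixes of its
   prefixes: a palindromic suffix of a prefix that is shorter than the longest
   one is the mirror image of a palindromic suffix of a shorter prefix.  Such
   profiles satisfy 0 < x_m <= m and x_m <= x_(m-1) + 2, and they inject into
   duplication trees with n + 1 leaves: reading the profile from left to right,
   x_m = x_(m-1) + 2 lengthens the latest duplication by one gene to the left,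
   and any other value duplicates the single gene x_m places from the end.  The
   histories so built are canonical (each event ends at or after the start of
   the previous one), which makes the latest event the rightmost duplication
   block of the gene array, so the history, hence the profile, is recovered
   from the tree. *)

Lemma palindrome_rev (T : eqType) (p : seq T) : palindrome (rev p) = palindrome p.
Proof. by rewrite /palindrome revK eq_sym. Qed.

Lemma palindrome_inner (T : eqType) (x y : T) p :
  palindrome (x :: rcons p y) -> palindrome p.
Proof.
by rewrite /palindrome rev_cons rev_rcons => /eqP [_] /rcons_inj [-> _].
Qed.

Section LongestPalindromicSuffix.
Variable T : eqType.
Implicit Types p : seq T.

Definition lps p : nat :=
  size p - find (fun k => palindrome (drop k p)) (iota 0 (size p).+1).

Lemma has_palindrome_drop p : has (fun k => palindrome (drop k p)) (iota 0 (size p).+1).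
Proof.
by apply/hasP; exists (size p); [rewrite mem_iota; lia | rewrite drop_size].
Qed.

Lemma lps_size p : lps p <= size p.
Proof. exact: leq_subr. Qed.

Lemma palindrome_lps p : palindrome (drop (size p - lps p) p).
Proof.
have H := has_palindrome_drop p.
have Hf : find (fun k => palindrome (drop k p)) (iota 0 (size p).+1) <= size p.
  by move: H; rewrite has_find size_iota.
by rewrite /lps subKn //; have := nth_find 0 H; rewrite nth_iota.
Qed.

Lemma lps_max p k : palindrome (drop k p) -> size p - k <= lps p.
Proof.
move=> Hp; rewrite /lps leq_sub2l //; rewrite leqNgt; apply/negP => Hk.
have Hks : k <= size p.
  by have := has_palindrome_drop p; rewrite has_find size_iota; lia.
by have := before_find 0 Hk; rewrite nth_iota ?Hp //; lia.
Qed.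

Lemma lps_gt0 p : 0 < size p -> 0 < lps p.
Proof.
case/lastP: p => [//|p z] _.
have := @lps_max (rcons p z) (size p); rewrite drop_rcons // drop_size size_rcons.
by move=> /(_ (eqxx _)); lia.
Qed.

(* A palindromic suffix of [rcons p z] of length L > 2 has a palindromic
   suffix of [p] of length L - 2 inside it. *)
Lemma lps_rcons p z : lps (rcons p z) <= (lps p).+2.
Proof.
set L := lps (rcons p z); case: (leqP L 2) => HL; first lia.
have HLp : L <= (size p).+1 by rewrite -(size_rcons p z) lps_size.
have := palindrome_lps (rcons p z); rewrite -/L size_rcons drop_rcons; last lia.
case ED: (drop ((size p).+1 - L) p) => [|w M].
  by have := congr1 size ED; rewrite size_drop /=; lia.
move/palindrome_inner => PM.
have EM : M = drop ((size p).+1 - L).+1 p.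
  by have := congr1 (drop 1) ED; rewrite drop_drop /= drop0 => <-; congr drop; lia.
by have := @lps_max p ((size p).+1 - L).+1; rewrite -EM => /(_ PM); lia.
Qed.

(* A suffix of a palindrome is the mirror image of the prefix of the same length. *)
Lemma palindrome_short_suffix p L l : L <= size p -> l <= L ->
  palindrome (drop (size p - L) p) ->
  palindrome (drop (size p - l) p) = palindrome (take l (drop (size p - L) p)).
Proof.
move=> HL Hl HP; set Q := drop (size p - L) p in HP *.
have SQ : size Q = L by rewrite size_drop; lia.
have -> : drop (size p - l) p = drop (L - l) Q by rewrite drop_drop; congr drop; lia.
by rewrite -palindrome_rev -{2}(eqP HP) take_rev SQ.
Qed.

End LongestPalindromicSuffix.

Definition lps_profile (T : eqType) (s : seq T) : seq nat :=
  [seq lps (take j s) | j <- iota 1 (size s)].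

Lemma lps_profile_take (T U : eqType) (s : seq T) (t : seq U) :
  size s = size t -> lps_profile s = lps_profile t ->
  forall j, j <= size s -> lps (take j s) = lps (take j t).
Proof.
move=> Sz E [|j] Hj; first by rewrite !take0.
have := congr1 (nth 0 ^~ j) E; rewrite /lps_profile -Sz.
by rewrite !(nth_map 0) ?size_iota // nth_iota //; lia.
Qed.

Lemma lps_profile_palindromes (T U : eqType) (s : seq T) (t : seq U) :
  size s = size t -> lps_profile s = lps_profile t ->
  forall j l, j <= size s -> l <= j ->
  palindrome (drop (j - l) (take j s)) = palindrome (drop (j - l) (take j t)).
Proof.
move=> Sz Ep j; elim/ltn_ind: j => j IH l Hj Hl.
have HL := lps_profile_take Sz Ep Hj.
have Sp : size (take j s) = j by rewrite size_takel.
have Sq : size (take j t) = j by rewrite size_takel // -Sz.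
set L := lps (take j s) in HL.
have LJ : L <= j by rewrite -[X in _ <= X]Sp lps_size.
have Ps := palindrome_lps (take j s); have Pt := palindrome_lps (take j t).
rewrite Sp -/L in Ps; rewrite Sq -HL in Pt.
case: (ltngtP l L) => Hc.
- have Rs := @palindrome_short_suffix _ (take j s) L l (ltac:(lia)) (ltnW Hc).
  have Rt := @palindrome_short_suffix _ (take j t) L l (ltac:(lia)) (ltnW Hc).
  rewrite Sp in Rs; rewrite Sq in Rt; rewrite (Rs Ps) (Rt Pt).
  rewrite !take_drop !take_takel; try lia.
  set j' := l + (j - L); have -> : j - L = j' - l by rewrite /j'; lia.
  apply: IH; rewrite /j'; lia.
- have notpal (V : eqType) (p : seq V) : size p = j -> lps p = L ->
      palindrome (drop (j - l) p) = false.
    by move=> Sz' EL; apply/negP => /lps_max; lia.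
  by rewrite !notpal.
- by rewrite Hc Ps Pt.
Qed.

(* [admissible m h L]: the values of [L] are those of a profile from index
   [m] on, [h] being the value at index [m - 1]. *)
Fixpoint admissible (m h : nat) (L : seq nat) : bool :=
  if L is x :: L' then [&& 0 < x, x <= m, x <= h.+2 & admissible m.+1 x L'] else true.

Lemma lps_take_succ (T : eqType) (s : seq T) m :
  m < size s -> lps (take m.+1 s) <= (lps (take m s)).+2.
Proof. by case: s => [//|x0 s'] Hm; rewrite (take_nth x0) // lps_rcons. Qed.

Lemma lps_profile_admissible (T : eqType) (s : seq T) : admissible 1 0 (lps_profile s).
Proof.
suff gen k m : m + k <= size s ->
    admissible m.+1 (lps (take m s)) [seq lps (take j s) | j <- iota m.+1 k].
  by have := gen (size s) 0 (leqnn _); rewrite take0.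
elim: k m => [//|k IH] m Hk /=.
have Hs : size (take m.+1 s) = m.+1 by rewrite size_takel; lia.
rewrite lps_gt0 ?Hs // -[X in _ <= X]Hs lps_size lps_take_succ /=; last lia.
by apply: IH; lia.
Qed.

Lemma eq_manacher (T U : eqType) (s : seq T) (t : seq U) : size s = size t ->
  (forall a b, 0 < a -> a <= b.+1 -> b <= size s ->
     palindrome (substr s a b) = palindrome (substr t a b)) ->
  manacher s = manacher t.
Proof.
move=> Sz HP; rewrite /manacher Sz; apply: eq_map => i.
case: ifP => _; [rewrite /man_odd | rewrite /man_even]; rewrite Sz; apply: eq_bigl => r.
- by case: (r < _) / idP => //= ?; case: (_ + r <= _) / idP => //= ?; apply: HP; lia.
- by case: (r <= _) / idP => //= ?; case: (_ + r <= _) / idP => //= ?; apply: HP; lia.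
Qed.

Lemma substr_suffix_take (T : Type) (s : seq T) a b : 0 < a -> a <= b.+1 ->
  substr s a b = drop (b - (b.+1 - a)) (take b s).
Proof. by move=> Ha Hab; rewrite /substr take_drop; congr drop; [lia | congr take; lia]. Qed.

Lemma manacher_lps_profile (T U : eqType) (s : seq T) (t : seq U) :
  size s = size t -> lps_profile s = lps_profile t -> manacher s = manacher t.
Proof.
move=> Sz Ep; apply: eq_manacher => // a b Ha Hab Hb.
by rewrite !substr_suffix_take //; apply: lps_profile_palindromes => //; lia.
Qed.

Definition first_occurrence_code (T : eqType) (s : seq T) : seq nat :=
  [seq index x s | x <- s].

Lemma palindrome_map_index (T : eqType) (s x : seq T) : {subset x <= s} ->
  palindrome [seq index y s | y <- x] = palindrome x.
Proof.
case: x => [//|y0 x] Hx; rewrite /palindrome -map_rev; apply/eqP/eqP => [E|->] //.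
have nth_index_in u : {subset u <= s} -> map (nth y0 s) [seq index y s | y <- u] = u.
  by move=> Hu; rewrite -map_comp map_id_in // => y /Hu /= /nth_index ->.
rewrite -(nth_index_in (rev _)) ?E ?nth_index_in // => y; rewrite ?mem_rev; exact: Hx.
Qed.

Lemma manacher_first_occurrence_code (T : eqType) (s : seq T) :
  manacher (first_occurrence_code s) = manacher s.
Proof.
apply: eq_manacher => [|a b _ _ _]; first by rewrite size_map.
rewrite /substr -map_drop -map_take palindrome_map_index // => y.
by move=> /mem_take /mem_drop.
Qed.

Notation gene := (seq bool).

Section DuplicationEvent.
Variables (a : seq gene) (i l : nat).
Hypothesis il_a : i + l <= size a.

Let size_front : size (take i a) = i.
Proof. by rewrite size_takel //; lia. Qed.

Let size_block : size (take l (drop i a)) = l.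
Proof. by rewrite size_takel // size_drop; lia. Qed.

Lemma size_dup_event : size (dup_event a i l) = size a + l.
Proof. by rewrite /dup_event !size_cat !size_map size_front size_block size_drop; lia. Qed.

Lemma nth_dup_event_front q : q < i -> nth [::] (dup_event a i l) q = nth [::] a q.
Proof. by move=> Hq; rewrite /dup_event nth_cat size_front Hq nth_take. Qed.

Lemma nth_dup_event_left q : i <= q < i + l ->
  nth [::] (dup_event a i l) q = rcons (nth [::] a q) false.
Proof.
move=> /andP[Hq1 Hq2]; rewrite /dup_event nth_cat size_front ifF; last lia.
rewrite nth_cat size_map size_block ifT; last lia.
rewrite (nth_map [::]) ?size_block; last lia.
by rewrite nth_take ?nth_drop ?subnKC //; lia.
Qed.

Lemma nth_dup_event_right q : i + l <= q < i + l + l ->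
  nth [::] (dup_event a i l) q = rcons (nth [::] a (q - l)) true.
Proof.
move=> /andP[Hq1 Hq2]; rewrite /dup_event nth_cat size_front ifF; last lia.
rewrite nth_cat size_map size_block ifF; last lia.
rewrite nth_cat size_map size_block ifT; last lia.
rewrite (nth_map [::]) ?size_block; last lia.
by rewrite nth_take ?nth_drop; [congr (rcons (nth _ _ _) _) | ..]; lia.
Qed.

Lemma nth_dup_event_back q : i + l + l <= q ->
  nth [::] (dup_event a i l) q = nth [::] a (q - l).
Proof.
move=> Hq; rewrite /dup_event nth_cat size_front ifF; last lia.
rewrite nth_cat size_map size_block ifF; last lia.
rewrite nth_cat size_map size_block ifF; last lia.
by rewrite nth_drop; congr nth; lia.
Qed.

End DuplicationEvent.

Lemma dup_event_inj a a' i l : i + l <= size a -> i + l <= size a' ->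
  dup_event a i l = dup_event a' i l -> a = a'.
Proof.
move=> Ha Ha' E.
have Sz : size a = size a' by have := congr1 size E; rewrite !size_dup_event //; lia.
apply: (eq_from_nth (x0 := [::]) Sz) => q _.
case: (ltnP q i) => [q_i | i_q].
  by rewrite -(nth_dup_event_front Ha q_i) E nth_dup_event_front.
case: (ltnP q (i + l)) => [q_il | il_q].
  have q_blk : i <= q < i + l by rewrite i_q q_il.
  by apply: (@rcons_injl _ false); rewrite -(nth_dup_event_left Ha q_blk) E nth_dup_event_left.
have := congr1 (nth [::] ^~ (q + l)) E.
by rewrite !nth_dup_event_back ?addnK //; lia.
Qed.

Definition prefix_free (a : seq gene) : Prop :=
  uniq a /\ {in a &, forall x y, prefix x y -> x = y}.

Lemma perm_prefix_free a b : perm_eq a b -> prefix_free a -> prefix_free b.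
Proof.
move=> pab [Ua Pa]; split; first by rewrite -(perm_uniq pab).
by move=> x y; rewrite -!(perm_mem pab); apply: Pa.
Qed.

Lemma prefix_rcons_rcons (g : gene) b : ~~ prefix (rcons g b) g.
Proof. by apply/negP => /size_prefix; rewrite size_rcons ltnn. Qed.

Lemma prefix_rconsP (x g : gene) b : prefix x (rcons g b) -> x = rcons g b \/ prefix x g.
Proof.
case/prefixP => z; case/lastP: z => [|z c]; first by rewrite cats0; left.
by rewrite -rcons_cat => /rcons_inj [-> _]; right; apply: prefix_prefix.
Qed.

Definition children (B : seq gene) : seq gene :=
  [seq rcons g false | g <- B] ++ [seq rcons g true | g <- B].

Lemma childrenP B x : reflect (exists2 g, g \in B & exists b, x = rcons g b) (x \in children B).
Proof.
apply: (iffP idP) => [|[g gB [[] ->]]]; rewrite mem_cat.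
- by case/orP => /mapP [g gB ->]; exists g => //; [exists false | exists true].
- by rewrite (map_f (rcons^~ true)) ?orbT.
- by rewrite (map_f (rcons^~ false)).
Qed.

Lemma prefix_free_children B O : prefix_free (B ++ O) -> prefix_free (children B ++ O).
Proof.
move=> [U P]; move: (U); rewrite cat_uniq => /and3P [UB /hasPn BO UO].
have child_new x : x \in children B -> x \notin B ++ O.
  case/childrenP => g gB [b ->]; apply/negP => old.
  have gBO : g \in B ++ O by rewrite mem_cat gB.
  by have := P g _ gBO old (prefix_rcons g b); move/(congr1 size); rewrite size_rcons; lia.
split.
  rewrite cat_uniq UO andbT; apply/andP; split.
    rewrite cat_uniq !map_inj_uniq ?UB //=; try exact: rcons_injl.
    rewrite andbT; apply/hasPn => _ /mapP [g _ ->].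
    by apply/negP => /mapP [g' _ /rcons_inj []].
  by apply/hasPn => x xO; apply/negP => /child_new; rewrite mem_cat xO orbT.
have inB g : g \in B -> g \in B ++ O by rewrite mem_cat => ->.
have inO g : g \in O -> g \in B ++ O by rewrite mem_cat => ->; rewrite orbT.
move=> x y; rewrite (mem_cat x) (mem_cat y).
case/orP => [/childrenP [g gB [b ->]] | xO]; case/orP => [/childrenP [g' g'B [b' ->]] | yO] pxy.
- case: (prefix_rconsP pxy) => [//| pg'].
  have E := P g g' (inB _ gB) (inB _ g'B) (prefix_trans (prefix_rcons g b) pg').
  by move: pg'; rewrite -E (negbTE (prefix_rcons_rcons g b)).
- have E := P g y (inB _ gB) (inO _ yO) (prefix_trans (prefix_rcons g b) pxy).
  by move: (BO y yO); rewrite -E gB.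
- case: (prefix_rconsP pxy) => [Ex | pxg'].
    have : x \in children B by apply/childrenP; exists g'; last exists b'.
    by move=> /child_new; rewrite inO.
  have E := P x g' (inO _ xO) (inB _ g'B) pxg'.
  by move: (BO x xO); rewrite E g'B.
- exact: P (inO _ xO) (inO _ yO) pxy.
Qed.

Lemma prefix_free_dup a i l : prefix_free a -> prefix_free (dup_event a i l).
Proof.
move=> Pa; set B := take l (drop i a); set O := take i a ++ drop (i + l) a.
have Ea : perm_eq (B ++ O) a by rewrite perm_catCA /B addnC -drop_drop !cat_take_drop.
have Ed : perm_eq (children B ++ O) (dup_event a i l).
  by rewrite /O perm_catCA /children /dup_event -/B !catA.
apply: perm_prefix_free Ed (prefix_free_children _).
by apply: perm_prefix_free Pa; rewrite perm_sym.
Qed.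

(* Positions [p, p + 2s) hold the left children of some genes g_0 .. g_(s-1),
   followed by their right children: the trace a duplication of length [s]
   at [p] would leave. *)
Definition dup_block (a : seq gene) p s : Prop :=
  p + s + s <= size a /\ forall j, j < s ->
    exists g, nth [::] a (p + j) = rcons g false /\ nth [::] a (p + s + j) = rcons g true.

Definition blocks_before (a : seq gene) b : Prop :=
  forall p s, 0 < s -> dup_block a p s -> p < b.

Lemma dup_block_dup_event a i l : i + l <= size a -> dup_block (dup_event a i l) i l.
Proof.
move=> il_a; split; first by rewrite size_dup_event //; lia.
move=> j Hj; exists (nth [::] a (i + j)); split.
  by rewrite nth_dup_event_left //; lia.
by rewrite nth_dup_event_right ?addnK; [congr (rcons (nth _ _ _) _) | ..]; lia.
Qed.

Lemma nth_uniq_inj (T : eqType) (x0 : T) (a : seq T) q q' : uniq a ->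
  q < size a -> q' < size a -> nth x0 a q = nth x0 a q' -> q = q'.
Proof. by move=> Ua Hq Hq' E; apply/eqP; rewrite -(nth_uniq x0 Hq Hq' Ua) E. Qed.

(* A block of the new array starting after [i] would either overlap the new
   block (excluded by uniqueness of genes), start among the right children,
   or be a shifted block of [a] starting at or after [i + l >= b]. *)
Lemma blocks_before_dup a b i l : prefix_free a -> blocks_before a b -> 0 < l ->
  i + l <= size a -> b <= i + l -> blocks_before (dup_event a i l) i.+1.
Proof.
move=> Pa Ba l_gt0 il_a b_il p s s_gt0 [Hsz Hblk]; rewrite ltnS leqNgt; apply/negP => i_p.
have [Ua _] := prefix_free_dup i l Pa.
rewrite size_dup_event // in Hsz.
have [g [E1 E2]] := Hblk 0 s_gt0; rewrite !addn0 in E1 E2.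
case: (ltnP p (i + l)) => [p_il | il_p].
  rewrite (nth_dup_event_left il_a) in E1; last lia.
  move/rcons_inj: E1 => -[Eg]; subst g.
  have s_l : p + s = p + l.
    apply: (nth_uniq_inj (x0 := [::]) Ua); rewrite ?size_dup_event //; try lia.
    by rewrite E2 (nth_dup_event_right il_a) ?addnK //; lia.
  have [g' [E3 _]] := Hblk (i + l - p) (ltac:(lia)).
  by rewrite subnKC ?(nth_dup_event_right il_a) in E3; [case/rcons_inj: E3 | lia..].
case: (ltnP p (i + l + l)) => [p_ill | ill_p].
  by rewrite (nth_dup_event_right il_a) in E1; [case/rcons_inj: E1 | lia].
suff : p - l < b by lia.
apply: Ba s_gt0 _; split; first lia.
move=> j Hj; have [g' [F1 F2]] := Hblk j Hj; exists g'.
rewrite !(nth_dup_event_back il_a) in F1 F2; try lia.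
by split; [rewrite -F1 | rewrite -F2]; congr nth; lia.
Qed.

Notation event := (nat * nat)%type.

(* Histories list events (0-based start, length), most recent first. *)
Fixpoint realize (H : seq event) : seq gene :=
  if H is (i, l) :: H' then dup_event (realize H') i l else [:: [::]].

Lemma realize_cons i l H : realize ((i, l) :: H) = dup_event (realize H) i l.
Proof. by []. Qed.

Definition start_bound (H : seq event) : nat := if H is (i, _) :: _ then i.+1 else 0.

(* Each event must end at or after the start of the previous one; this makes
   the most recent event the rightmost duplication block. *)
Fixpoint canonical (H : seq event) : bool :=
  if H is (i, l) :: H' then
    [&& canonical H', 0 < l, i + l <= size (realize H') & start_bound H' <= i + l]
  else true.

Lemma canonical_realize H : canonical H ->
  [/\ prefix_free (realize H), blocks_before (realize H) (start_bound H),
      0 < size (realize H) & dup_reachable (realize H)].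
Proof.
elim: H => [|[i l] H IH] /=.
  split=> //; last exact: dup_root.
  - by split=> // x y; rewrite !inE => /eqP -> /eqP ->.
  - by move=> p s s_gt0 [Hsz _]; move: Hsz => /=; lia.
case/and4P => C l_gt0 il_a b_il; case: (IH C) => Pa Ba Sa Ra; split.
- exact: prefix_free_dup.
- exact: (blocks_before_dup Pa Ba l_gt0 il_a b_il).
- by rewrite size_dup_event //; lia.
- exact: dup_step.
Qed.

Lemma size_realize H : canonical H -> size (realize H) = (sumn [seq e.2 | e <- H]).+1.
Proof.
by elim: H => [|[i l] H IH] //= /and4P [C _ il_a _]; rewrite size_dup_event // IH //; lia.
Qed.

Lemma canonical_realize_inj H1 H2 : canonical H1 -> canonical H2 ->
  realize H1 = realize H2 -> H1 = H2.
Proof.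
elim: H1 H2 => [|[i l] H1 IH] [|[i' l'] H2] //=.
- move=> _ /and4P [C l_gt0 il_a _] /(congr1 size); rewrite size_dup_event //=.
  by have [_ _ S _] := canonical_realize C; lia.
- move=> /and4P [C l_gt0 il_a _] _ /(congr1 size); rewrite size_dup_event //=.
  by have [_ _ S _] := canonical_realize C; lia.
move=> /and4P [C1 l1 il1 b1] /and4P [C2 l2 il2 b2] E.
have [P1 B1 _ _] := canonical_realize C1; have [P2 B2 _ _] := canonical_realize C2.
have W1 := blocks_before_dup P1 B1 l1 il1 b1; have W2 := blocks_before_dup P2 B2 l2 il2 b2.
have X1 := dup_block_dup_event il1; have X2 := dup_block_dup_event il2.
rewrite E in W1 X1.
have ii' : i = i' by have := W1 _ _ l2 X2; have := W2 _ _ l1 X1; lia.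
subst i'.
have ll' : l = l'.
  have [S1 Y1] := X1; have [_ Y2] := X2; rewrite size_dup_event // in S1.
  have [g [A1 A2]] := Y1 0 l1; have [g' [A1' A2']] := Y2 0 l2.
  rewrite A1 in A1'; case/rcons_inj: A1' => Eg; subst g'.
  have [U _] := prefix_free_dup i l' P2.
  have : i + l + 0 = i + l' + 0.
    by apply: (nth_uniq_inj (x0 := [::]) U); rewrite ?size_dup_event ?A2 ?A2' //; lia.
  lia.
subst l'; congr (_ :: _); apply: IH => //; exact: dup_event_inj il1 il2 E.
Qed.

(* The inverse of [encode] below: the run of profile values that builds up
   the event [(i, l)]. *)
Fixpoint profile_of (H : seq event) : seq nat :=
  if H is (i, l) :: H' then
    profile_of H' ++ [seq size (realize H') - (i + l) + 1 + 2 * j | j <- iota 0 l]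
  else [::].

Lemma profile_of_cons i l H : profile_of ((i, l) :: H) =
  profile_of H ++ [seq size (realize H) - (i + l) + 1 + 2 * j | j <- iota 0 l].
Proof. by []. Qed.

(* The state is (history, array size, previous profile value). *)
Definition encode_step (st : seq event * nat * nat) (x : nat) : seq event * nat * nat :=
  let: (H, m, h) := st in
  if x == h.+2 then
    (if H is (i, l) :: H' then (i.-1, l.+1) :: H' else [::], m.+1, x)
  else ((m - x, 1) :: H, m.+1, x).

Fixpoint encode_from st (L : seq nat) :=
  if L is x :: L' then encode_from (encode_step st x) L' else st.

Definition encode (L : seq nat) : seq event := (encode_from ([::], 1, 0) L).1.1.

Definition encode_inv (st : seq event * nat * nat) : Prop :=
  let: (H, m, h) := st in
  [/\ canonical H, m = size (realize H) &
      if H is (i, _) :: _ then h + i + 1 = m else h = 0].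

Lemma encode_step_inv H m h x : encode_inv (H, m, h) -> 0 < x -> x <= m -> x <= h.+2 ->
  encode_inv (encode_step (H, m, h) x) /\
  profile_of (encode_step (H, m, h) x).1.1 = rcons (profile_of H) x.
Proof.
case=> C Em Eh x_gt0 x_m x_h; rewrite /encode_step; case: eqP => [x_ext | x_new].
  case: H C Em Eh => [|[i l] H'] C Em Eh; first by rewrite /= in Em; lia.
  move: C => /= /and4P [C l_gt0 il_a b_il]; rewrite realize_cons size_dup_event // in Em.
  have il_a' : i.-1 + l.+1 <= size (realize H') by lia.
  split.
    split; [by rewrite /= C il_a' /=; lia | by rewrite size_dup_event //; lia | lia].
  transitivity (profile_of ((i.-1, l.+1) :: H')); first by [].
  rewrite !profile_of_cons (_ : i.-1 + l.+1 = i + l); last lia.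
  have -> : iota 0 l.+1 = iota 0 l ++ [:: l] by rewrite -addn1 iotaD.
  by rewrite map_cat catA cats1; congr (rcons _ _); lia.
have new_a : (m - x) + 1 <= size (realize H) by lia.
split.
  split; [rewrite /= C new_a /= | by rewrite realize_cons size_dup_event //; lia | lia].
  by case: H C Em Eh new_a => [|[i l] H'] /=; lia.
by rewrite /= -cats1; congr (_ ++ [:: _]); lia.
Qed.

Lemma encode_from_inv L H m h : encode_inv (H, m, h) -> admissible m h L ->
  let st := encode_from (H, m, h) L in
  encode_inv st /\ profile_of st.1.1 = profile_of H ++ L.
Proof.
elim: L H m h => [|x L IH] H m h I; first by rewrite /= cats0.
case/and4P => x_gt0 x_m x_h AL.
have [I' E] := encode_step_inv I x_gt0 x_m x_h.
change (encode_from (H, m, h) (x :: L)) with (encode_from (encode_step (H, m, h) x) L).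
move: I' E; case E0: (encode_step (H, m, h) x) => [[H' m'] h'] I' E.
have Em : m' = m.+1 by move: E0; rewrite /encode_step; case: eqP => _ [].
have Eh : h' = x by move: E0; rewrite /encode_step; case: eqP => _ [].
subst m' h'; have [I'' E''] := IH H' m.+1 x I' AL.
by split; rewrite // E'' E cat_rcons.
Qed.

Lemma encode_correct L : admissible 1 0 L ->
  canonical (encode L) /\ profile_of (encode L) = L.
Proof.
move=> AL; have I0 : encode_inv ([::], 1, 0) by [].
have [I E] := encode_from_inv I0 AL; move: I E; rewrite /encode.
by case: (encode_from _ L) => [[H m] h] [C _ _] /= E.
Qed.

Lemma encode_inj L1 L2 : admissible 1 0 L1 -> admissible 1 0 L2 ->
  realize (encode L1) = realize (encode L2) -> L1 = L2.
Proof.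
move=> /encode_correct [C1 P1] /encode_correct [C2 P2] E.
by rewrite -P1 -P2 (canonical_realize_inj C1 C2 E).
Qed.

Lemma size_profile_of H : size (profile_of H) = sumn [seq e.2 | e <- H].
Proof.
by elim: H => [|[i l] H IH] //=; rewrite size_cat size_map size_iota IH addnC.
Qed.

Lemma size_realize_encode L : admissible 1 0 L -> size (realize (encode L)) = (size L).+1.
Proof.
by move=> /encode_correct [C P]; rewrite size_realize // -size_profile_of P.
Qed.

Lemma has_card_undup (T : eqType) (P : T -> Prop) (s : seq T) :
  (forall x, x \in s <-> P x) -> has_card P (size (undup s)).
Proof. by move=> sP; exists (undup s); split; rewrite ?undup_uniq // => x; rewrite mem_undup. Qed.

Lemma size_undup_map_le (A B C : eqType) (X : seq A) (f : A -> B) (g : A -> C) :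
  {in X &, forall x y, f x = f y -> g x = g y} ->
  size (undup (map g X)) <= size (undup (map f X)).
Proof.
elim: X => [//|x X IH] fg /=.
have fgX : {in X &, forall x y, f x = f y -> g x = g y}.
  by move=> y z Hy Hz; apply: fg; rewrite inE ?Hy ?Hz orbT.
have IH' := IH fgX.
case: ifP => gX; case: ifP => fX /=; [exact: IH' | exact: leqW IH' | | by rewrite ltnS].
case/mapP: fX => y yX fxy; move/negbT: gX => /negP []; apply/mapP; exists y => //.
by apply: fg; rewrite ?inE ?eqxx ?yX ?orbT.
Qed.

Fixpoint words (n k : nat) : seq (seq nat) :=
  if k is k'.+1 then [seq c :: u | c <- iota 0 n, u <- words n k'] else [:: [::]].

Lemma mem_words n k u : (u \in words n k) = (size u == k) && all (fun c => c < n) u.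
Proof.
elim: k u => [|k IH] u /=; first by case: u.
apply/allpairsP/andP => [[[c v] /= [Hc Hv ->]] | [Hs Ha]].
  by move: Hv; rewrite IH mem_iota /= in Hc * => /andP [Hv Ha]; split=> //=; lia.
case: u Hs Ha => [//|c v] /= Hs /andP [Hc Hv]; exists (c, v); split=> //=.
  by rewrite mem_iota; lia.
by rewrite IH Hv andbT.
Qed.

Lemma manacher_words n (T : eqType) (s : seq T) : size s = n ->
  manacher s \in [seq manacher u | u <- words n n].
Proof.
move=> sn; apply/mapP; exists (first_occurrence_code s); last first.
  by rewrite manacher_first_occurrence_code.
rewrite mem_words size_map sn eqxx /=; apply/allP => _ /mapP [x xs ->].
by rewrite -sn index_mem.
Qed.

Lemma has_card_manacher n :
  has_card (is_manacher_array n) (size (undup [seq manacher u | u <- words n n])).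
Proof.
apply: has_card_undup => A; split => [/mapP [u] | [T [s [sn <-]]]].
  by rewrite mem_words => /andP [/eqP un _] ->; exists nat, u.
exact: manacher_words.
Qed.

Definition dup_successors (a : seq gene) : seq (seq gene) :=
  [seq dup_event a i l | l <- iota 1 (size a), i <- iota 0 (size a - l).+1].

Lemma dup_successorsP a b :
  reflect (exists i l, [/\ 0 < l, i + l <= size a & b = dup_event a i l])
          (b \in dup_successors a).
Proof.
apply: (iffP allpairsPdep) => [[l [i [Hl Hi ->]]] | [i [l [Hl Hil ->]]]].
  by exists i, l; move: Hl Hi; rewrite !mem_iota; split=> //; lia.
by exists l, i; rewrite !mem_iota; split=> //; lia.
Qed.

Fixpoint reachable_upto (k : nat) : seq (seq gene) :=
  if k is k'.+1 then reachable_upto k' ++ flatten (map dup_successors (reachable_upto k'))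
  else [:: [:: [::]]].

Lemma reachable_upto_mono k k' : k <= k' -> {subset reachable_upto k <= reachable_upto k'}.
Proof.
elim: k' => [|k' IH]; first by rewrite leqn0 => /eqP ->.
rewrite leq_eqVlt ltnS => /orP [/eqP -> // | /IH kk' a /kk' ka].
by rewrite /= mem_cat ka.
Qed.

Lemma reachable_uptoP k a : a \in reachable_upto k -> dup_reachable a.
Proof.
elim: k a => [|k IH] a /=; first by rewrite inE => /eqP ->; exact: dup_root.
rewrite mem_cat => /orP [/IH // | /flatten_mapP [b /IH Rb /dup_successorsP]].
by case=> i [l [Hl Hil ->]]; exact: dup_step.
Qed.

Lemma reachable_upto_size a : dup_reachable a -> a \in reachable_upto (size a).
Proof.
elim=> [|b i l _ IH Hl Hil]; first by apply: (@reachable_upto_mono 0); rewrite ?inE.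
apply: (@reachable_upto_mono (size b).+1); first by rewrite size_dup_event //; lia.
rewrite /= mem_cat; apply/orP; right; apply/flatten_mapP; exists b => //.
by apply/dup_successorsP; exists i, l.
Qed.

Lemma has_card_dup_tree m :
  has_card (is_dup_tree m) (size (undup [seq a <- reachable_upto m | size a == m])).
Proof.
apply: has_card_undup => a; rewrite mem_filter; split.
  by case/andP => /eqP am /reachable_uptoP; split.
by case=> Ra am; rewrite am eqxx -am reachable_upto_size.
Qed.

Definition tree_of_string (T : eqType) (s : seq T) : seq gene :=
  realize (encode (lps_profile s)).

Lemma tree_of_string_dup_tree (T : eqType) (s : seq T) :
  is_dup_tree (size s).+1 (tree_of_string s).
Proof.
have A := lps_profile_admissible s; have [C _] := encode_correct A.
have [_ _ _ R] := canonical_realize C.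
by split=> //; rewrite size_realize_encode // size_map size_iota.
Qed.

Lemma manacher_tree_of_string (T U : eqType) (s : seq T) (t : seq U) : size s = size t ->
  tree_of_string s = tree_of_string t -> manacher s = manacher t.
Proof.
move=> st /(encode_inj (lps_profile_admissible s) (lps_profile_admissible t)).
exact: manacher_lps_profile.
Qed.

Theorem theorem3p1 (n : nat) : 1 <= n ->
  exists rho r : nat,
    [/\ has_card (is_manacher_array n) rho,
        has_card (is_dup_tree n.+1) r &
        rho <= r].
Proof.
move=> _; set X := words n n.
have Xn u : u \in X -> size u = n by rewrite mem_words => /andP [/eqP].
do 2!eexists; split; [exact: has_card_manacher | exact: has_card_dup_tree |].
apply: (@leq_trans (size (undup [seq tree_of_string u | u <- X]))).
  apply: size_undup_map_le => u v uX vX.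
  by apply: manacher_tree_of_string; rewrite (Xn _ uX) (Xn _ vX).
apply: uniq_leq_size; first exact: undup_uniq.
move=> a; rewrite !mem_undup mem_filter => /mapP [u uX ->].
have [Ru Su] := tree_of_string_dup_tree u; rewrite Xn // in Su.
by rewrite Su eqxx -Su reachable_upto_size.
Qed.
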